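(* There is no binary self-orthogonal $[54,6,26]$ code.
   Context: A binary linear code $C$ is self-orthogonal if $C\subseteq C^\perp$. *)

From HB Require Import structures.
From mathcomp Require Import all_boot all_order all_algebra.
Set Implicit Arguments. Unset Strict Implicit. Unset Printing Implicit Defensive.
Import GRing.Theory.
Local Open Scope ring_scope.

Definition wt (n : nat) (v : 'rV['F_2]_n) : nat := #|[set i : 'I_n | v 0 i != 0]|.

Definition dotv (n : nat) (u v : 'rV['F_2]_n) : 'F_2 := \sum_(i < n) u 0 i * v 0 i.

Definition code (n : nat) := {vspace 'rV['F_2]_n}.

(* C is self-orthogonal: C is contained in its dual C^perp,
   i.e. every codeword is orthogonal to every codeword. *)
Definition self_orthogonal (n : nat) (C : code n) : Prop :=
  forall u v, u \in C -> v \in C -> dotv u v = 0.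

Definition min_distance_is (n : nat) (C : code n) (d : nat) : Prop :=
  (exists2 c, c \in C & (c != 0) /\ wt c = d) /\
  (forall c, c \in C -> c != 0 -> (d <= wt c)%N).

Definition is_nkd_code (n k d : nat) (C : code n) : Prop :=
  \dim C = k /\ min_distance_is C d.

From mathcomp Require Import all_boot all_order all_algebra.
From mathcomp Require Import finfield zify.
Set Implicit Arguments. Unset Strict Implicit. Unset Printing Implicit Defensive.
Import GRing.Theory.
Local Open Scope ring_scope.

(* In a self-orthogonal binary code any two codewords overlap in an even number
   of positions, so wt (u + v) = wt u + wt v (mod 4). Hence the doubly-even
   codewords form a subcode D of index at most 2: a [54,6,26] code would give
   |D| >= 32, with every nonzero word of D of weight >= 28. But in a binary linear
   code every coordinate is nonzero in exactly half the words or in none, so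
   28 (|D| - 1) <= 27 |D| (the Plotkin bound), i.e. |D| <= 28. *)

Lemma card_le_translate (V : finZmodType) (A B : {set V}) (e : V) :
  {in A, forall x, x + e \in B} -> (#|A| <= #|B|)%N.
Proof.
move=> AeB; rewrite -(card_imset _ (addIr e)); apply: subset_leq_card.
by apply/subsetP => _ /imsetP[x xA ->]; exact: AeB.
Qed.

Lemma card_le_double (V : finZmodType) (T S : {set V}) :
  {in T :\: S &, forall x y, x + y \in S} -> (#|T| <= 2 * #|S|)%N.
Proof.
move=> addTS; rewrite -(cardsID S T) mul2n -addnn.
apply: leq_add; first exact/subset_leq_card/subsetIr.
have [-> | [e eTS]] := set_0Vmem (T :\: S); first by rewrite cards0.
by apply: (@card_le_translate _ _ _ e) => x xTS; exact: addTS.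
Qed.

Lemma F2_cases (a : 'F_2) : a = 0 \/ a = 1.
Proof. by case: a => [[|[|m]]] //= lt_m2; [left | right]; apply: val_inj. Qed.

Definition overlap n (u v : 'rV['F_2]_n) : nat :=
  \sum_(i < n) ((u 0%R i != 0%R) && (v 0%R i != 0%R) : nat).

Lemma sum_nat_of_bool (T : finType) (A : {pred T}) (P : pred T) :
  (\sum_(x in A) P x = #|[set x in A | P x]|)%N.
Proof.
rewrite -sum1dep_card [RHS]big_mkcondr /=.
by apply: eq_bigr => x _; case: (P x).
Qed.

Lemma wtE n (v : 'rV['F_2]_n) : wt v = (\sum_(i < n) (v 0%R i != 0%R : nat))%N.
Proof. by rewrite sum_nat_of_bool; apply: eq_card => i; rewrite !inE. Qed.

Lemma overlap_diag n (u : 'rV['F_2]_n) : overlap u u = wt u.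
Proof. by rewrite wtE; apply: eq_bigr => i _; rewrite andbb. Qed.

Lemma wtD n (u v : 'rV['F_2]_n) : (wt (u + v) + 2 * overlap u v = wt u + wt v)%N.
Proof.
rewrite !wtE /overlap big_distrr -!big_split; apply: eq_bigr => i _ /=.
by rewrite mxE; case: (F2_cases (u 0 i)) => ->; case: (F2_cases (v 0 i)) => ->.
Qed.

Lemma dotv_overlap n (u v : 'rV['F_2]_n) : dotv u v = (overlap u v)%:R.
Proof.
rewrite /dotv /overlap natr_sum; apply: eq_bigr => i _.
by case: (F2_cases (u 0 i)) => ->; case: (F2_cases (v 0 i)) => ->;
  rewrite ?(mulr0, mul0r, mulr1, eqxx, oner_eq0).
Qed.

Definition doubly_even n (C : code n) : {set 'rV['F_2]_n} :=
  [set x | (x \in C) && (4 %| wt x)%N].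

Section SelfOrthogonalCode.

Variables (n : nat) (C : code n).
Hypothesis C_so : self_orthogonal C.

Lemma overlap_even (u v : 'rV['F_2]_n) :
  u \in C -> v \in C -> ~~ odd (overlap u v).
Proof.
move=> uC vC; have := C_so uC vC; rewrite dotv_overlap => /eqP.
by rewrite -(dvdn_pcharf (pchar_Fp (isT : prime 2))) dvdn2.
Qed.

Lemma wt_even (u : 'rV['F_2]_n) : u \in C -> ~~ odd (wt u).
Proof. by move=> uC; rewrite -overlap_diag overlap_even. Qed.

Lemma wtD_mod4 (u v : 'rV['F_2]_n) : u \in C -> v \in C ->
  (wt (u + v) = wt u + wt v %[mod 4])%N.
Proof. by move=> uC vC; have := wtD u v; have := overlap_even uC vC; lia. Qed.

Lemma doubly_even_add : {in doubly_even C &, forall x y, x + y \in doubly_even C}.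
Proof.
move=> x y; rewrite !inE => /andP[xC x4] /andP[yC y4]; rewrite rpredD //=.
by have := wtD_mod4 xC yC; lia.
Qed.

Lemma card_code_le_doubly_even : (#|C| <= 2 * #|doubly_even C|)%N.
Proof.
rewrite -[#|C|]cardsE; apply: card_le_double => x y; rewrite !inE.
move=> /andP[/negbTE x4 xC] /andP[/negbTE y4 yC]; rewrite rpredD //=.
by have := wtD_mod4 xC yC; have := wt_even xC; have := wt_even yC; lia.
Qed.

End SelfOrthogonalCode.

Section Plotkin.

Variables (n : nat) (S : {set 'rV['F_2]_n}).
Hypothesis S_add : {in S &, forall x y, x + y \in S}.

Lemma card_coord_neq0_le i : (2 * #|[set x in S | x 0%R i != 0%R]| <= #|S|)%N.
Proof.
set A := [set x in S | _]; have sAS : A \subset S by apply/subsetP => x /setIdP[].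
rewrite -(cardsID A S) (setIidPr sAS) mul2n -addnn leq_add2l.
have [-> | [e eA]] := set_0Vmem A; first by rewrite cards0.
apply: (@card_le_translate _ _ _ e) => x xA.
move: xA eA; rewrite !inE => /andP[xS xi] /andP[eS ei].
rewrite S_add //= mxE negbK.
by case: (F2_cases (x 0 i)) xi => ->; case: (F2_cases (e 0 i)) ei => ->.
Qed.

Lemma sum_wt_le : (2 * \sum_(x in S) wt x <= n * #|S|)%N.
Proof.
under eq_bigr do rewrite wtE.
rewrite exchange_big big_distrr /= -[n in (n * _)%N]card_ord -sum_nat_const.
by apply: leq_sum => i _; rewrite sum_nat_of_bool card_coord_neq0_le.
Qed.

Theorem plotkin_bound d : {in S, forall x, x != 0 -> (d <= wt x)%N} ->
  (#|S| * (2 * d - n) <= 2 * d)%N.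
Proof.
move=> S_wt; have sum_wt_ge : (#|S :\ 0%R| * d <= \sum_(x in S) wt x)%N.
  rewrite -sum_nat_const big_mkcond [X in (_ <= X)%N]big_mkcond /=.
  apply: leq_sum => x _.
  rewrite !inE; case: eqP => [//| /eqP x0]; case xS: (x \in S) => //=.
  exact: S_wt.
have card_S : (#|S| <= #|S :\ 0%R| + 1)%N.
  by rewrite [in X in (X <= _)%N](cardsD1 0%R S) addnC leq_add2l leq_b1.
have := sum_wt_le; rewrite mulnBr leq_subLR; nia.
Qed.

End Plotkin.

Theorem corollary6p6 :
  ~ (exists C : code 54, is_nkd_code 6 26 C /\ self_orthogonal C).
Proof.
move=> [C [[dimC [_ min_wt]] C_so]].
have card_C : #|C| = 64 by rewrite card_vspace card_Fp // dimC.
have D_wt : {in doubly_even C, forall x, x != 0 -> (28 <= wt x)%N}.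
  by move=> x; rewrite inE => /andP[xC x4] x0; have := min_wt x xC x0; lia.
have := card_code_le_doubly_even C_so; rewrite card_C.
have := plotkin_bound (doubly_even_add C_so) D_wt; lia.
Qed.
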